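(* Let $I$ be a resident-minimal instance and $J$ a resident-changeless and hospital-complete extension of $I$. Then $J$ is resident-minimal, $\mathrm{prop}(I)=\mathrm{prop}(J)$, and $\mathrm{tent}(I)\setminus\mathrm{pend}(I)\subseteq\mathrm{tent}(J)\subseteq\mathrm{tent}(I)$.
   Context: An instance $I$ consists of finite disjoint sets $R$ (residents) and $H$ (hospitals), a positive integer quota $q_h$ for each $h\in H$, for each $r\in R$ a preference list of $r$ (a sequence of distinct members of $H$, not necessarily all), and for each $h\in H$ a preference list of $h$ (a sequence of distinct members of $R$). A list is complete if it contains every member of the opposite side; an instance is hospital-complete if every hospital's list is complete. A match is a pair $(r,h)\in R\times H$. For a set $M$ of matches, $\mathrm{res}_h M=\{r:(r,h)\in M\}$, $\mathrm{res}\,M=\{r:(r,h)\in M\text{ for some }h\}$. $J$ is an extension of $I$ (same $R,H$, quotas) if every list of $J$ has the corresponding list of $I$ as a prefix; it is resident-changeless if every resident's list is the same in $I$ and $J$. An event is $(r,h)^+$ (proposal) or $(r,h)^-$ (rejection). For an event sequence $\sigma$, $\mathrm{prop}(\sigma)$, $\mathrm{rej}(\sigma)$ are the sets of matches proposed/rejected in $\sigma$, $\mathrm{tent}(\sigma)=\mathrm{prop}(\sigma)\setminus\mathrm{rej}(\sigma)$, and $\mathrm{pend}_I(\sigma)$ is the set of $(r,h)\in\mathrm{tent}(\sigma)$ with $r$ not on the list of $h$ in $I$. A match $(r,h)\in M$ is ousted from $M$ in $I$ if the list of $h$ in $I$ contains at least $q_h$ residents of $\mathrm{res}_h M$ and either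 $r$ is not on it or $r$ is preceded on it by at least $q_h$ residents of $\mathrm{res}_h M$. $I$-feasible sequences: the empty sequence is $I$-feasible; if $\sigma$ is $I$-feasible then $\sigma+(r,h)^+$ is $I$-feasible if $r\notin\mathrm{res}\,\mathrm{tent}(\sigma)$, $(r,h)\notin\mathrm{prop}(\sigma)$, $h$ is on the list of $r$ in $I$ and $(r,h')\in\mathrm{rej}(\sigma)$ for every $h'$ preceding $h$ on it; and $\sigma+(r,h)^-$ is $I$-feasible if $(r,h)$ is ousted from $\mathrm{prop}(\sigma)$ in $I$ and $(r,h)\notin\mathrm{rej}(\sigma)$. All maximal $I$-feasible sequences contain the same events; $\mathrm{prop}(I),\mathrm{tent}(I),\mathrm{pend}(I)$ denote $\mathrm{prop}(\sigma),\mathrm{tent}(\sigma),\mathrm{pend}_I(\sigma)$ for any maximal $I$-feasible $\sigma$. $I$ is resident-minimal if $\mathrm{prop}(I)$ equals the set of matches $(r,h)$ with $h$ on the list of $r$ in $I$. *)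

(* Residents and hospitals are two finite types (hence disjoint). *)
From mathcomp Require Import all_boot.
Set Implicit Arguments. Unset Strict Implicit. Unset Printing Implicit Defensive.

Section HR.
Variables (R H : finType).

Record instance := Instance {
  quota : H -> nat;
  rlist : R -> seq H;
  hlist : H -> seq R
}.

Definition wf_instance (I : instance) : Prop :=
  (forall h, 0 < quota I h) /\ (forall r, uniq (rlist I r)) /\ (forall h, uniq (hlist I h)).

Definition hospital_complete (I : instance) : Prop :=
  forall h r, r \in hlist I h.

Definition extension (I J : instance) : Prop :=
  (forall h, quota J h = quota I h) /\
  (forall r, prefix (rlist I r) (rlist J r)) /\
  (forall h, prefix (hlist I h) (hlist J h)).

Definition resident_changeless (I J : instance) : Prop :=
  forall r, rlist J r = rlist I r.

(* a match is a pair (r,h); an event is (true,(r,h)) = proposal (r,h)^+,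
   (false,(r,h)) = rejection (r,h)^- *)
Definition event := (bool * (R * H))%type.
Definition propose (m : R * H) : event := (true, m).
Definition reject (m : R * H) : event := (false, m).

Definition prop_of (s : seq event) : {set R * H} := [set m | propose m \in s].
Definition rej_of (s : seq event) : {set R * H} := [set m | reject m \in s].
Definition tent_of (s : seq event) : {set R * H} := prop_of s :\: rej_of s.
Definition pend_of (I : instance) (s : seq event) : {set R * H} :=
  [set m in tent_of s | m.1 \notin hlist I m.2].

Definition res_h (M : {set R * H}) (h : H) : {set R} := [set r | (r, h) \in M].
Definition res (M : {set R * H}) : {set R} := [set r | [exists h, (r, h) \in M]].

Definition ousted (I : instance) (M : {set R * H}) (r : R) (h : H) : Prop :=
  (r, h) \in M /\
  quota I h <= #|[set r' in res_h M h | r' \in hlist I h]| /\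
  (r \notin hlist I h \/
   quota I h <= #|[set r' in res_h M h | (r' \in hlist I h) &&
                                         (index r' (hlist I h) < index r (hlist I h))]|).

Inductive feasible (I : instance) : seq event -> Prop :=
| feas_nil : feasible I [::]
| feas_prop s r h :
    feasible I s ->
    r \notin res (tent_of s) ->
    (r, h) \notin prop_of s ->
    h \in rlist I r ->
    (forall h', h' \in rlist I r -> index h' (rlist I r) < index h (rlist I r) ->
                (r, h') \in rej_of s) ->
    feasible I (rcons s (propose (r, h)))
| feas_rej s r h :
    feasible I s ->
    ousted I (prop_of s) r h ->
    (r, h) \notin rej_of s ->
    feasible I (rcons s (reject (r, h))).

Definition maximal_feasible (I : instance) (s : seq event) : Prop :=
  feasible I s /\ forall e, ~ feasible I (rcons s e).

(* prop(I) is prop(s) for any maximal I-feasible s (all give the same events) *)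
Definition acceptable (I : instance) : {set R * H} := [set m | m.2 \in rlist I m.1].

Definition resident_minimal (I : instance) : Prop :=
  forall s, maximal_feasible I s -> prop_of s = acceptable I.

End HR.

(* Every I-feasible sequence can be replayed, event by event, inside any maximal
   J-feasible sequence: a proposal is still forced there because the resident's
   list is unchanged, and a rejection is still forced because extending the
   hospitals' lists only makes a match easier to oust.  Hence prop(I) lies in
   prop(J), which lies in the acceptable pairs of J, i.e. of I, i.e. in prop(I)
   by resident-minimality: so J is resident-minimal, prop(I) = prop(J), and
   rej(I) lies in rej(J), giving tent(J) within tent(I).  Conversely, a match
   whose resident is on the hospital's I-list is ousted from prop(J) in J
   exactly when it is ousted in I, so a non-pending tentative match of I stays
   tentative in J. *)

From mathcomp Require Import all_boot.
From mathcomp Require Import zify.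
From Stdlib Require Import Classical.

Set Implicit Arguments. Unset Strict Implicit. Unset Printing Implicit Defensive.

Lemma index_cat_lt_notin (T : eqType) (l l' : seq T) x y :
  x \in l -> y \notin l -> index x (l ++ l') < index y (l ++ l').
Proof.
by move=> xl yl; rewrite !index_cat xl (negbTE yl) (leq_trans _ (leq_addr _ _)) ?index_mem.
Qed.

Lemma index_cat_leq (T : eqType) (l l' : seq T) y : index y l <= index y (l ++ l').
Proof. by rewrite index_cat; case: ifP => // /negbT/memNindex->; apply: leq_addr. Qed.

Lemma index_cat_lt_mem (T : eqType) (l l' : seq T) x y : y \in l ->
  (x \in l ++ l') && (index x (l ++ l') < index y (l ++ l'))
  = (x \in l) && (index x l < index y l).
Proof.
move=> yl; rewrite mem_cat; have [xl | xl] /= := boolP (x \in l).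
  by rewrite !index_cat xl yl.
by apply/negbTE; rewrite negb_and -leqNgt ltnW ?orbT ?index_cat_lt_notin.
Qed.

Section Matching.
Variables (R H : finType).
Implicit Types (I J : instance R H) (s t : seq (event R H)) (M : {set R * H}).

Lemma prop_of_rcons_propose s m : prop_of (rcons s (propose m)) = m |: prop_of s.
Proof. by apply/setP => x; rewrite !inE mem_rcons in_cons xpair_eqE eqxx. Qed.

Lemma prop_of_rcons_reject s m : prop_of (rcons s (reject m)) = prop_of s.
Proof. by apply/setP => x; rewrite !inE mem_rcons in_cons xpair_eqE. Qed.

Lemma rej_of_rcons_propose s m : rej_of (rcons s (propose m)) = rej_of s.
Proof. by apply/setP => x; rewrite !inE mem_rcons in_cons xpair_eqE. Qed.

Lemma rej_of_rcons_reject s m : rej_of (rcons s (reject m)) = m |: rej_of s.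
Proof. by apply/setP => x; rewrite !inE mem_rcons in_cons xpair_eqE eqxx. Qed.

Lemma ousted_subset I M M' r h : M \subset M' -> ousted I M r h -> ousted I M' r h.
Proof.
move=> sMM' [rhM [listed preceding]].
have card_mono (P : pred R) :
    #|[set r' in res_h M h | P r']| <= #|[set r' in res_h M' h | P r']|.
  apply/subset_leq_card/subsetP => x; rewrite !inE.
  by case/andP => /(subsetP sMM') -> ->.
split; first exact: subsetP rhM.
split; first exact: leq_trans listed (card_mono _).
by case: preceding => [|preceding]; [left | right; exact: leq_trans preceding (card_mono _)].
Qed.

Section HospitalExtension.
Variables (I J : instance R H) (h : H).
Hypotheses (quotaJ : quota J h = quota I h) (prefixJ : prefix (hlist I h) (hlist J h)).

Lemma ousted_extension M r : ousted I M r h -> ousted J M r h.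
Proof.
case/prefixP: prefixJ => rest hlistJ [rhM [listed preceding]].
rewrite /ousted quotaJ hlistJ; split=> //; split.
  apply: leq_trans listed (subset_leq_card _); apply/subsetP => x.
  by rewrite !inE mem_cat => /andP[-> ->].
right; case: preceding => [rI | preceding].
  apply: leq_trans listed (subset_leq_card _); apply/subsetP => x; rewrite !inE mem_cat.
  by case/andP => -> xI; rewrite xI index_cat_lt_notin.
apply: leq_trans preceding (subset_leq_card _); apply/subsetP => x; rewrite !inE mem_cat.
case/and3P => -> xI lt; rewrite xI index_cat xI /=.
exact: leq_trans lt (index_cat_leq _ _ _).
Qed.

Lemma ousted_extension_listed M r :
  r \in hlist I h -> ousted J M r h -> ousted I M r h.
Proof.
case/prefixP: prefixJ => rest hlistJ rI [rhM [_ preceding]].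
rewrite quotaJ hlistJ mem_cat rI /= in preceding.
case: preceding => // preceding.
have precedingI : quota I h <= #|[set r' in res_h M h |
    (r' \in hlist I h) && (index r' (hlist I h) < index r (hlist I h))]|.
  apply: leq_trans preceding (subset_leq_card _); apply/subsetP => x.
  by rewrite !inE index_cat_lt_mem.
split=> //; split; last by right.
apply: leq_trans precedingI (subset_leq_card _); apply/subsetP => x; rewrite !inE.
by case/and3P => -> ->.
Qed.

End HospitalExtension.

Record feasible_invariant I s : Prop := FeasibleInvariant {
  rej_sub_prop : rej_of s \subset prop_of s;
  rej_before_prop : forall r h h', (r, h) \in prop_of s -> h' \in rlist I r ->
    index h' (rlist I r) < index h (rlist I r) -> (r, h') \in rej_of s;
  prop_sub_acceptable : prop_of s \subset acceptable I;
  rej_ousted : forall r h, (r, h) \in rej_of s -> ousted I (prop_of s) r h;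
  uniq_events : uniq s
}.

Lemma invariant_of_feasible I s : feasible I s -> feasible_invariant I s.
Proof.
elim=> [|{}s r h _ [rp before acc ous uq] _ fresh hr hrej
        |{}s r h _ [rp before acc ous uq] rh_ousted fresh].
- by split=> //; [move=> r h h' | apply/subsetP => m | move=> r h]; rewrite inE.
- split; rewrite ?prop_of_rcons_propose ?rej_of_rcons_propose.
  + exact: subset_trans rp (subsetUr _ _).
  + by move=> r' h' h''; rewrite in_setU1 => /orP[/eqP[-> ->]|]; [apply: hrej | apply: before].
  + by rewrite subUset sub1set inE hr.
  + by move=> r' h' /ous; apply: ousted_subset (subsetUr _ _).
  + by rewrite rcons_uniq uq andbT; apply: contra fresh; rewrite inE.
- split; rewrite ?prop_of_rcons_reject ?rej_of_rcons_reject //.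
  + by rewrite subUset sub1set rp andbT; case: rh_ousted.
  + by move=> r' h' h'' rh' h''r lt; rewrite in_setU1 (before _ _ _ rh' h''r lt) orbT.
  + by move=> r' h'; rewrite in_setU1 => /orP[/eqP[-> ->] //|]; apply: ous.
  + by rewrite rcons_uniq uq andbT; apply: contra fresh; rewrite inE.
Qed.

Lemma maximal_rej I s r h :
  maximal_feasible I s -> ousted I (prop_of s) r h -> (r, h) \in rej_of s.
Proof.
case=> fs stuck ousted_rh; apply/negPn/negP => fresh.
by apply: (stuck (reject (r, h))); apply: feas_rej.
Qed.

Lemma maximal_prop I s r h :
  maximal_feasible I s -> h \in rlist I r ->
  (forall h', h' \in rlist I r -> index h' (rlist I r) < index h (rlist I r) ->
     (r, h') \in rej_of s) ->
  (r, h) \in prop_of s.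
Proof.
move=> [fs stuck] hr hrej; have [rp before acc _ _] := invariant_of_feasible fs.
apply/negPn/negP => fresh; have [| rfree] := boolP (r \in res (tent_of s)).
- rewrite inE => /existsP[h' /setDP[rh' nrej]].
  have h'r : h' \in rlist I r by have := subsetP acc _ rh'; rewrite inE.
  case: (ltngtP (index h' (rlist I r)) (index h (rlist I r))) => [lt | gt | eq].
  + by rewrite hrej in nrej.
  + by move: fresh; rewrite (subsetP rp) // (before _ h').
  + by move: fresh; rewrite -(index_inj h h'r hr eq) rh'.
- by apply: (stuck (propose (r, h))); apply: feas_prop.
Qed.

Lemma feasible_size I s : feasible I s -> size s <= #|{: bool * (R * H)}|.
Proof. by case/invariant_of_feasible => _ _ _ _ /card_uniqP <-; apply: max_card. Qed.

Lemma exists_maximal_feasible I : exists s, maximal_feasible I s.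
Proof.
suff: forall n s, feasible I s -> #|{: bool * (R * H)}| - size s <= n ->
    exists t, maximal_feasible I t.
  by apply; [apply: feas_nil | apply: leqnn].
elim=> [|n IH] s fs bound.
all: have [[e fe] | stuck] := classic (exists e, feasible I (rcons s e));
  last by exists s; split=> // e fe; apply: stuck; exists e.
- by have := feasible_size fe; rewrite size_rcons; lia.
- by apply: IH fe _; rewrite size_rcons; lia.
Qed.

Lemma feasible_sub_maximal I J s t :
  extension I J -> resident_changeless I J -> feasible I s -> maximal_feasible J t ->
  prop_of s \subset prop_of t /\ rej_of s \subset rej_of t.
Proof.
move=> [quotaJ [_ prefixJ]] rlistJ fs mt.
elim: fs => [|{}s r h _ [IHprop IHrej] _ _ hr hrej | {}s r h _ [IHprop IHrej] rh_ousted _].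
- by split; apply/subsetP => m; rewrite inE.
- rewrite prop_of_rcons_propose rej_of_rcons_propose subUset sub1set IHprop andbT.
  split=> //; apply: (maximal_prop mt); rewrite rlistJ // => h' h'r lt.
  exact/(subsetP IHrej)/hrej.
- rewrite prop_of_rcons_reject rej_of_rcons_reject subUset sub1set IHrej andbT.
  split=> //; apply: (maximal_rej mt); apply: (ousted_extension (quotaJ h) (prefixJ h)).
  exact: ousted_subset IHprop rh_ousted.
Qed.

End Matching.

Theorem proposition4 (R H : finType) (I J : instance R H) :
  wf_instance I -> wf_instance J ->
  resident_minimal I ->
  extension I J -> resident_changeless I J -> hospital_complete J ->
  resident_minimal J /\
  (forall s t, maximal_feasible I s -> maximal_feasible J t ->
     prop_of s = prop_of t /\
     (tent_of s :\: pend_of I s \subset tent_of t) /\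
     (tent_of t \subset tent_of s)).
Proof.
move=> _ _ minI ext rlistJ _.
have acceptableJ : acceptable J = acceptable I by apply/setP => m; rewrite !inE rlistJ.
have minJ : resident_minimal J.
  move=> t mt; have [s ms] := exists_maximal_feasible I.
  have [sub_st _] := feasible_sub_maximal ext rlistJ (proj1 ms) mt.
  have [_ _ acc_t _ _] := invariant_of_feasible (proj1 mt).
  by apply/eqP; rewrite eqEsubset acc_t acceptableJ -(minI _ ms).
split=> // s t ms mt.
have prop_st : prop_of s = prop_of t by rewrite (minI _ ms) (minJ _ mt) acceptableJ.
have [_ rej_st] := feasible_sub_maximal ext rlistJ (proj1 ms) mt.
have [quotaJ [_ prefixJ]] := ext.
split=> //; split; last first.
  by rewrite /tent_of prop_st; apply: setDS.
apply/subsetP => -[r h]; rewrite in_setD => /andP[not_pend tent_s].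
rewrite /pend_of in_set tent_s negbK /= in not_pend.
move: tent_s; rewrite /tent_of !in_setD -prop_st => /andP[nrej_s ->]; rewrite andbT.
apply: contra nrej_s => rej_t.
apply: (maximal_rej ms); apply: (ousted_extension_listed (quotaJ h) (prefixJ h) not_pend).
by rewrite prop_st; apply: rej_ousted (invariant_of_feasible (proj1 mt)) _ _ rej_t.
Qed.
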